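(* Let $(E,\mu)$ and $(F,\nu)$ be fuzzy Riesz spaces and let $T$ be a fuzzy Riesz homomorphism of $E$ onto $F$. The following are equivalent: (1) $T$ is a fuzzy Riesz $\sigma$-homomorphism; (2) for every fuzzy $\sigma$-ideal $A$ in $F$, the inverse image $T^{-1}(A)$ is a fuzzy $\sigma$-ideal in $E$; (3) the kernel $\mathrm{Ker}\,T=\{x\in E: Tx=0\}$ is a fuzzy $\sigma$-ideal in $E$.
   Context: A fuzzy order on a real vector space $E$ is a map $\mu:E\times E\to[0,1]$ with $\mu(x,x)=1$; $\mu(x,y)+\mu(y,x)>1$ implies $x=y$; and $\mu(x,z)\ge\sup_{y}\min(\mu(x,y),\mu(y,z))$. Write $x\le y$ for $\mu(x,y)>\frac12$; suprema/infima are taken with respect to this relation. $(E,\mu)$ is a fuzzy ordered linear space if $\mu(x_1,x_2)>\frac12$ implies $\mu(x_1,x_2)\le\mu(x_1+x,x_2+x)$ for all $x$ and $\mu(x_1,x_2)\le\mu(\alpha x_1,\alpha x_2)$ for all $\alpha>0$; it is a fuzzy Riesz space if $x\vee y=\sup\{x,y\}$ and $x\wedge y=\inf\{x,y\}$ exist for all $x,y$. $E^+=\{x:0\le x\}$, $A^+=A\cap E^+$, $|x|=x\vee(-x)$. $x_n\uparrow x$ means $x_n\le x_{n+1}$ for all $n$ and $x=\sup_n x_n$. A fuzzy ideal is a vector subspace $A$ such that $\mu(|x|,|y|)>\frac12$ and $y\in A$ imply $x\in A$; it is a fuzzy $\sigma$-ideal if $\{x_n\}\subseteq A^+$ and $x_n\uparrow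 x$ in $E$ imply $x\in A$. A fuzzy Riesz homomorphism is a linear map with $T(x\vee y)=Tx\vee Ty$; it is a fuzzy Riesz $\sigma$-homomorphism if $x=\sup_n x_n$ ($n=1,2,\dots$) in $E$ implies $Tx=\sup_n Tx_n$ in $F$. *)

From HB Require Import structures.
From mathcomp Require Import all_boot all_order all_algebra.
From mathcomp Require Import boolp classical_sets reals.
Set Implicit Arguments. Unset Strict Implicit. Unset Printing Implicit Defensive.
Import Order.TTheory GRing.Theory Num.Theory.
Local Open Scope ring_scope.
Local Open Scope classical_set_scope.

Section FuzzyDefs.
Variables (R : realType) (E : lmodType R).
Implicit Types (mu : E -> E -> R) (A S : set E).

(* fuzzy order; the transitivity sup-condition mu(x,z) >= sup_y min(..)
   is written out as: every min(mu x y, mu y z) is <= mu x z *)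
Definition fuzzy_order mu :=
  [/\ (forall x y, 0 <= mu x y <= 1),
      (forall x, mu x x = 1),
      (forall x y, mu x y + mu y x > 1 -> x = y) &
      (forall x y z, Num.min (mu x y) (mu y z) <= mu x z)].

(* the crisp order x <= y *)
Definition fle mu (x y : E) : Prop := mu x y > 2^-1.

Definition is_sup mu S (s : E) :=
  (forall x, S x -> fle mu x s) /\
  (forall u, (forall x, S x -> fle mu x u) -> fle mu s u).

Definition is_inf mu S (s : E) :=
  (forall x, S x -> fle mu s x) /\
  (forall u, (forall x, S x -> fle mu u x) -> fle mu u s).

Definition fuzzy_ordered_linear_space mu :=
  fuzzy_order mu /\
  forall x1 x2, mu x1 x2 > 2^-1 ->
    (forall x, mu x1 x2 <= mu (x1 + x) (x2 + x)) /\
    (forall a : R, 0 < a -> mu x1 x2 <= mu (a *: x1) (a *: x2)).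

Definition fuzzy_riesz_space mu :=
  fuzzy_ordered_linear_space mu /\
  forall x y, (exists s, is_sup mu [set x; y] s) /\ (exists i, is_inf mu [set x; y] i).

(* |x| = x \/ (-x), stated relationally: a is |x| *)
Definition is_abs mu (x a : E) := is_sup mu [set x; - x] a.

Definition subspace A :=
  [/\ A 0, (forall x y, A x -> A y -> A (x + y)) & (forall (a : R) x, A x -> A (a *: x))].

Definition fuzzy_ideal mu A :=
  subspace A /\
  forall x y ax ay, is_abs mu x ax -> is_abs mu y ay -> fle mu ax ay -> A y -> A x.

Definition incr_to mu (xn : nat -> E) (x : E) :=
  (forall n, fle mu (xn n) (xn n.+1)) /\ is_sup mu (range xn) x.

Definition fuzzy_sigma_ideal mu A :=
  fuzzy_ideal mu A /\
  forall (xn : nat -> E) x, (forall n, A (xn n) /\ fle mu 0 (xn n)) ->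
    incr_to mu xn x -> A x.

End FuzzyDefs.

Section FuzzyHom.
Variables (R : realType) (E F : lmodType R).

(* T(x \/ y) = Tx \/ Ty, stated relationally (suprema are unique) *)
Definition fuzzy_riesz_hom (mu : E -> E -> R) (nu : F -> F -> R) (T : {linear E -> F}) :=
  forall x y s, is_sup mu [set x; y] s -> is_sup nu [set T x; T y] (T s).

Definition fuzzy_riesz_sigma_hom (mu : E -> E -> R) (nu : F -> F -> R) (T : {linear E -> F}) :=
  fuzzy_riesz_hom mu nu T /\
  forall (xn : nat -> E) x, is_sup mu (range xn) x -> is_sup nu (range (fun n => T (xn n))) (T x).

End FuzzyHom.

(** Conditions (1) => (2) => (3) are routine: a σ-homomorphism pulls σ-ideals
    back to σ-ideals, and Ker T is the preimage of the σ-ideal {0}.  For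
    (3) => (1), replacing a sequence by its partial joins z_n = x_0 ∨ ... ∨ x_n
    reduces the claim to increasing sequences z_n ↑ x.  If T w is an upper bound
    of the T z_n, the positive parts (z_n - w)^+ lie in Ker T and increase to
    (x - w)^+, which therefore lies in the σ-ideal Ker T; hence T x - T w <= 0. *)
From HB Require Import structures.
From mathcomp Require Import all_boot all_order all_algebra.
From mathcomp Require Import boolp classical_sets reals.
From mathcomp Require Import lra.
Set Implicit Arguments. Unset Strict Implicit. Unset Printing Implicit Defensive.
Import Order.TTheory GRing.Theory Num.Theory.
Local Open Scope ring_scope.
Local Open Scope classical_set_scope.

Section FuzzyOrderedSpace.
Variables (R : realType) (E : lmodType R) (mu : E -> E -> R).
Hypothesis mu_ols : fuzzy_ordered_linear_space mu.

Lemma fle_refl x : fle mu x x.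
Proof. by case: mu_ols => [[_ mu_xx _ _] _]; rewrite /fle mu_xx; lra. Qed.

Lemma fle_trans x y z : fle mu x y -> fle mu y z -> fle mu x z.
Proof.
case: mu_ols => [[_ _ _ mu_trans] _]; rewrite /fle => xy yz.
by apply: lt_le_trans (mu_trans x y z); rewrite lt_min xy yz.
Qed.

Lemma fle_anti x y : fle mu x y -> fle mu y x -> x = y.
Proof. by case: mu_ols => [[_ _ mu_anti _] _]; rewrite /fle => xy yx; apply: mu_anti; lra. Qed.

Lemma fle_add2r c x y : fle mu (x + c) (y + c) <-> fle mu x y.
Proof.
have fle_addr d u v : fle mu u v -> fle mu (u + d) (v + d).
  by case: mu_ols => [_ mu_lin] uv; apply: lt_le_trans uv ((mu_lin _ _ uv).1 d).
by split=> [/(fle_addr (- c))|/(fle_addr c)] //; rewrite !addrK.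
Qed.

Lemma is_sup_unique S s t : is_sup mu S s -> is_sup mu S t -> s = t.
Proof.
case=> s_ub s_least [t_ub t_least].
by apply: fle_anti; [exact: s_least t_ub|exact: t_least s_ub].
Qed.

Lemma is_sup2_ubl x y s : is_sup mu [set x; y] s -> fle mu x s.
Proof. by case=> s_ub _; apply: s_ub; left. Qed.

Lemma is_sup2_ubr x y s : is_sup mu [set x; y] s -> fle mu y s.
Proof. by case=> s_ub _; apply: s_ub; right. Qed.

Lemma is_sup2_least x y s u :
  is_sup mu [set x; y] s -> fle mu x u -> fle mu y u -> fle mu s u.
Proof. by case=> _ s_least xu yu; apply: s_least => z [->|->]. Qed.

Lemma is_sup2_r x y : fle mu x y -> is_sup mu [set x; y] y.
Proof.
move=> xy; split; first by move=> z [->|->] //; apply: fle_refl.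
by move=> u u_ub; apply: u_ub; right.
Qed.

Lemma is_sup2_mono x y c s t :
  fle mu x y -> is_sup mu [set x; c] s -> is_sup mu [set y; c] t -> fle mu s t.
Proof.
move=> xy sup_s sup_t; apply: is_sup2_least sup_s _ (is_sup2_ubr sup_t).
exact: fle_trans xy (is_sup2_ubl sup_t).
Qed.

Lemma is_sup_range_addr (y : nat -> E) c s :
  is_sup mu (range y) s -> is_sup mu (range (fun n => y n + c)) (s + c).
Proof.
case=> s_ub s_least; split=> [_ [n _ <-]|u u_ub].
  by apply/fle_add2r/s_ub; exists n.
rewrite -(subrK c u); apply/fle_add2r/s_least => _ [n _ <-].
by rewrite -(fle_add2r c) subrK; apply: u_ub; exists n.
Qed.

Lemma is_sup_range_join (y a : nat -> E) c s t :
  is_sup mu (range y) s -> is_sup mu [set s; c] t ->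
  (forall n, is_sup mu [set y n; c] (a n)) -> is_sup mu (range a) t.
Proof.
move=> [s_ub s_least] sup_t sup_a; split=> [_ [n _ <-]|u u_ub].
  apply: is_sup2_least (sup_a n) _ (is_sup2_ubr sup_t).
  by apply: fle_trans (is_sup2_ubl sup_t); apply: s_ub; exists n.
have a_u n : fle mu (a n) u by apply: u_ub; exists n.
apply: is_sup2_least sup_t _ (fle_trans (is_sup2_ubr (sup_a 0%N)) (a_u 0%N)).
by apply: s_least => _ [n _ <-]; apply: fle_trans (is_sup2_ubl (sup_a n)) (a_u n).
Qed.

Lemma zero_sigma_ideal : fuzzy_sigma_ideal mu [set 0].
Proof.
split; first split.
- split=> [//|x y -> ->|a x ->]; by rewrite ?addr0 ?scaler0.
- move=> x y ax ay abs_x abs_y ax_ay y0; move: y0 abs_y => -> abs_0.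
  have ay0 : ay = 0 by apply: is_sup_unique abs_0 _; rewrite oppr0; exact/is_sup2_r/fle_refl.
  move: ax_ay; rewrite ay0 => ax0.
  have x_le0 := fle_trans (is_sup2_ubl abs_x) ax0.
  have Nx_le0 := fle_trans (is_sup2_ubr abs_x) ax0.
  apply: fle_anti x_le0 _; apply/(fle_add2r (- x)); rewrite addrN add0r.
  exact: Nx_le0.
- move=> xn x xn0 [_ [x_ub x_least]].
  apply: fle_anti; first by apply: x_least => _ [n _ <-]; rewrite (xn0 n).1; apply: fle_refl.
  by rewrite -{1}(xn0 0%N).1; apply: x_ub; exists 0%N.
Qed.

Definition join_seq (xn z : nat -> E) :=
  z 0%N = xn 0%N /\ forall n, is_sup mu [set z n; xn n.+1] (z n.+1).

Lemma exists_join_seq xn :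
  (forall x y, exists s, is_sup mu [set x; y] s) -> exists z, join_seq xn z.
Proof.
move=> joins; have [join sup_join] := choice (fun p : E * E => joins p.1 p.2).
exists (fix z n := if n is m.+1 then join (z m, xn n) else xn 0%N).
by split=> // n; apply: (sup_join (_, _)).
Qed.

Section JoinSeq.
Variables (xn z : nat -> E).
Hypothesis z_join : join_seq xn z.

Lemma join_seq_incr n : fle mu (z n) (z n.+1).
Proof. exact: is_sup2_ubl (z_join.2 n). Qed.

Lemma join_seq_ub n : fle mu (xn n) (z n).
Proof. by case: n => [|n]; [rewrite z_join.1; apply: fle_refl|apply: is_sup2_ubr (z_join.2 n)]. Qed.

Lemma join_seq_least u : (forall n, fle mu (xn n) u) -> forall n, fle mu (z n) u.
Proof.
move=> xn_u; elim=> [|n IHn]; first by rewrite z_join.1; apply: xn_u.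
exact: is_sup2_least (z_join.2 n) IHn (xn_u n.+1).
Qed.

Lemma is_sup_join_seq s : is_sup mu (range z) s <-> is_sup mu (range xn) s.
Proof.
split=> [[s_ub s_least]|[s_ub s_least]]; split=> [_ [n _ <-]|u u_ub].
- by apply: fle_trans (join_seq_ub n) _; apply: s_ub; exists n.
- by apply: s_least => _ [n _ <-]; apply: join_seq_least => m; apply: u_ub; exists m.
- by apply: join_seq_least => m; apply: s_ub; exists m.
- by apply: s_least => _ [n _ <-]; apply: fle_trans (join_seq_ub n) _; apply: u_ub; exists n.
Qed.

End JoinSeq.

End FuzzyOrderedSpace.

Lemma preimage_subspace (R : realType) (E F : lmodType R) (T : {linear E -> F}) A :
  subspace A -> subspace (T @^-1` A).
Proof.
case=> A0 AD AZ; split; rewrite /preimage /=.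
- by rewrite linear0.
- by move=> x y Ax Ay; rewrite linearD; apply: AD.
- by move=> a x Ax; rewrite linearZ; apply: AZ.
Qed.

Section RieszHomomorphism.
Variables (R : realType) (E F : lmodType R) (mu : E -> E -> R) (nu : F -> F -> R).
Variable T : {linear E -> F}.
Hypotheses (mu_ols : fuzzy_ordered_linear_space mu) (nu_ols : fuzzy_ordered_linear_space nu).
Hypothesis T_hom : fuzzy_riesz_hom mu nu T.

Lemma fle_hom x y : fle mu x y -> fle nu (T x) (T y).
Proof. by move=> xy; apply: is_sup2_ubl (T_hom (is_sup2_r mu_ols xy)). Qed.

Lemma is_abs_hom x a : is_abs mu x a -> is_abs nu (T x) (T a).
Proof. by move=> /T_hom; rewrite /is_abs linearN. Qed.

Lemma join_seq_hom xn z :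
  join_seq mu xn z -> join_seq nu (fun n => T (xn n)) (fun n => T (z n)).
Proof. by case=> z0 zS; split=> [|n]; [rewrite z0|apply: T_hom]. Qed.

Lemma preimage_fuzzy_ideal A : fuzzy_ideal nu A -> fuzzy_ideal mu (T @^-1` A).
Proof.
case=> A_sub A_ideal; split; first exact: preimage_subspace.
move=> x y ax ay abs_x abs_y ax_ay; apply: A_ideal (is_abs_hom abs_x) (is_abs_hom abs_y) _.
exact: fle_hom.
Qed.

Lemma preimage_fuzzy_sigma_ideal A :
  fuzzy_riesz_sigma_hom mu nu T -> fuzzy_sigma_ideal nu A -> fuzzy_sigma_ideal mu (T @^-1` A).
Proof.
move=> [_ T_sup] [A_ideal A_sigma]; split; first exact: preimage_fuzzy_ideal.
move=> xn x xn_pos [xn_incr sup_x]; apply: (A_sigma (fun n => T (xn n))).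
  by move=> n; split; [exact: (xn_pos n).1|rewrite -(linear0 T); apply/fle_hom/(xn_pos n).2].
by split; [move=> n; apply/fle_hom/xn_incr|exact: T_sup sup_x].
Qed.

Hypothesis mu_joins : forall x y, exists s, is_sup mu [set x; y] s.

Lemma incr_sup_hom_sigma_hom :
  (forall xn x, incr_to mu xn x -> is_sup nu (range (fun n => T (xn n))) (T x)) ->
  fuzzy_riesz_sigma_hom mu nu T.
Proof.
move=> T_incr_sup; split=> // xn x sup_x.
have [z z_join] := exists_join_seq xn mu_joins.
apply/(is_sup_join_seq nu_ols (join_seq_hom z_join))/T_incr_sup; split.
  exact: join_seq_incr z_join.
exact/(is_sup_join_seq mu_ols z_join).
Qed.

Lemma ker_sigma_ideal_incr_sup_hom z x :
  (forall y, exists w, T w = y) -> fuzzy_sigma_ideal mu [set x | T x = 0] ->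
  incr_to mu z x -> is_sup nu (range (fun n => T (z n))) (T x).
Proof.
move=> T_onto [_ ker_sigma] [z_incr sup_x].
split=> [_ [n _ <-]|v]; first by apply: fle_hom; apply: sup_x.1; exists n.
have [w <-] := T_onto v; move=> Tw_ub.
have Tz_le n : fle nu (T (z n)) (T w) by apply: Tw_ub; exists n.
have [a sup_a] := choice (fun n => mu_joins (z n - w) 0).
have [b sup_b] := mu_joins (x - w) 0.
have Ta0 n : T (a n) = 0.
  apply: (is_sup_unique nu_ols (T_hom (sup_a n))); rewrite linearB linear0.
  apply/(is_sup2_r nu_ols)/(fle_add2r nu_ols (T w)); rewrite subrK add0r.
  exact: Tz_le.
have a_incr n : fle mu (a n) (a n.+1).
  by apply: (is_sup2_mono mu_ols _ (sup_a n) (sup_a n.+1)); apply/(fle_add2r mu_ols)/z_incr.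
have sup_b_a : is_sup mu (range a) b.
  exact: (is_sup_range_join (a := a) mu_ols (is_sup_range_addr mu_ols (- w) sup_x) sup_b sup_a).
have Tb0 : T b = 0.
  apply: (ker_sigma a b _ (conj a_incr sup_b_a)) => n; split; first exact: Ta0.
  exact: is_sup2_ubr (sup_a n).
apply/(fle_add2r nu_ols (- T w)); rewrite addrN -Tb0 -linearB.
exact/fle_hom/(is_sup2_ubl sup_b).
Qed.

End RieszHomomorphism.

Theorem theorem2p10 (R : realType) (E F : lmodType R)
    (mu : E -> E -> R) (nu : F -> F -> R) (T : {linear E -> F}) :
  fuzzy_riesz_space mu -> fuzzy_riesz_space nu ->
  fuzzy_riesz_hom mu nu T -> (forall y : F, exists x : E, T x = y) ->
  [<-> fuzzy_riesz_sigma_hom mu nu T;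
       (forall A : set F, fuzzy_sigma_ideal nu A -> fuzzy_sigma_ideal mu (T @^-1` A));
       fuzzy_sigma_ideal mu [set x | T x = 0]].
Proof.
move=> [mu_ols mu_lattice] [nu_ols _] T_hom T_onto.
have mu_joins x y := (mu_lattice x y).1.
tfae.
- by move=> T_sigma A; apply: preimage_fuzzy_sigma_ideal.
- by move=> pull_back; apply: (pull_back [set 0]); apply: zero_sigma_ideal.
- move=> ker_sigma; apply: incr_sup_hom_sigma_hom => // xn x.
  exact: ker_sigma_ideal_incr_sup_hom.
Qed.
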